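(* Let $q$ be a nonzero complex number and let ${\mathbb F}({\rm SP}_q^{2|1})$ be the unital complex superalgebra generated by the even elements $x_+, x_-, x_+^{-1}$ and the odd element $\theta$ subject to $$x_+\theta = q\,\theta x_+,\quad \theta x_- = q\, x_-\theta,\quad x_-x_+ = q^{-2}x_+x_-,\quad \theta^2 = q^{1/2}(q-1)\,x_-x_+,\quad x_+x_+^{-1}={\bf 1}=x_+^{-1}x_+ .$$ Then ${\mathbb F}({\rm SP}_q^{2|1})$ is a $\mathbb Z_2$-graded Hopf algebra, with: (i) coproduct $\Delta:{\mathbb F}({\rm SP}_q^{2|1})\to{\mathbb F}({\rm SP}_q^{2|1})\otimes{\mathbb F}({\rm SP}_q^{2|1})$ defined by $$\Delta(x_+)=x_+\otimes x_+,\quad \Delta(\theta)=\theta\otimes{\bf 1}+{\bf 1}\otimes\theta,\quad \Delta(x_-)=x_+^{-1}\otimes x_- + x_-\otimes x_+^{-1};$$ (ii) counit $\epsilon:{\mathbb F}({\rm SP}_q^{2|1})\to\mathbb C$ given by $\epsilon(x_+)=1$, $\epsilon(\theta)=0$, $\epsilon(x_-)=0$; (iii) a $\mathbb C$-algebra antihomomorphism (coinverse) $S:{\mathbb F}({\rm SP}_q^{2|1})\to{\mathbb F}({\rm SP}_{q^{-1}}^{2|1})$ defined by $$S(x_+)=x_+^{-1},\quad S(\theta)=-\theta,\quad S(x_-)=-x_+x_-x_+ .$$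
   Context: Grades: $\tau(x_\pm)=\tau(x_+^{-1})=0$, $\tau(\theta)=1$. For superalgebras the tensor product ${\mathbb A}\otimes{\mathbb A}$ has the product $(a_1\otimes a_2)(a_3\otimes a_4)=(-1)^{\tau(a_2)\tau(a_3)}a_1a_3\otimes a_2a_4$ for homogeneous elements. A $\mathbb Z_2$-graded (super-)Hopf algebra is a superalgebra ${\mathbb A}$ with linear maps $\Delta,\epsilon,S$ satisfying coassociativity $(\Delta\otimes{\rm id})\Delta=({\rm id}\otimes\Delta)\Delta$, the counit axiom $m(\epsilon\otimes{\rm id})\Delta={\rm id}=m({\rm id}\otimes\epsilon)\Delta$, the antipode axiom $m(S\otimes{\rm id})\Delta=\eta\epsilon=m({\rm id}\otimes S)\Delta$ (with $m$ the product and $\eta$ the unit map), $\Delta({\bf 1})={\bf 1}\otimes{\bf 1}$, $\epsilon({\bf 1})=1$, $S({\bf 1})={\bf 1}$, and $\Delta(ab)=\Delta(a)\Delta(b)$, $\epsilon(ab)=\epsilon(a)\epsilon(b)$, $S(ab)=(-1)^{\tau(a)\tau(b)}S(b)S(a)$. ${\mathbb F}({\rm SP}_{q^{-1}}^{2|1})$ denotes the same construction with $q$ replaced by $q^{-1}$. *)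

(* Presented superalgebra F(SP_q^{2|1}) realised honestly as
   (free algebra on 4 generators) / (two-sided ideal generated by the relations),
   with elements represented by formal finite linear combinations of words. *)
From HB Require Import structures.
From mathcomp Require Import all_boot all_order all_algebra.
From mathcomp Require Export complex.
Set Implicit Arguments. Unset Strict Implicit. Unset Printing Implicit Defensive.
Import Order.TTheory GRing.Theory Num.Theory.
Local Open Scope ring_scope.

Inductive gen := Xp | Xm | Xpi | Th.

Definition gen_eqb (a b : gen) : bool :=
  match a, b with
  | Xp, Xp | Xm, Xm | Xpi, Xpi | Th, Th => true
  | _, _ => false
  end.

Lemma gen_eqP : Equality.axiom gen_eqb.
Proof. by case; case; constructor. Qed.

HB.instance Definition _ := hasDecEq.Build gen gen_eqP.

Definition word := seq gen.

Definition wpar (w : word) : bool := odd (count (pred1 Th) w).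

Section SuperHopf.
Variable K : fieldType.

(* formal linear combinations in F, F (x) F, F (x) F (x) F, where F is the
   free algebra (basis: words; tensor powers: basis pairs / triples of words) *)
Definition fs1 := seq (K * word).
Definition fs2 := seq (K * word * word).
Definition fs3 := seq (K * word * word * word).

(* coefficients; two formal sums are equal in the free algebra (resp. its
   tensor powers) iff all coefficients agree *)
Definition coef1 (a : fs1) (w : word) : K := \sum_(p <- a | p.2 == w) p.1.
Definition coef2 (a : fs2) (u v : word) : K :=
  \sum_(p <- a | (p.1.2 == u) && (p.2 == v)) p.1.1.
Definition coef3 (a : fs3) (u v w : word) : K :=
  \sum_(p <- a | [&& p.1.1.2 == u, p.1.2 == v & p.2 == w]) p.1.1.1.
Definition feq1 (a b : fs1) := forall w, coef1 a w = coef1 b w.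
Definition feq2 (a b : fs2) := forall u v, coef2 a u v = coef2 b u v.
Definition feq3 (a b : fs3) := forall u v w, coef3 a u v w = coef3 b u v w.

(* vector space operations (addition is concatenation) *)
Definition scale1 (c : K) (a : fs1) : fs1 := [seq (c * p.1, p.2) | p <- a].
Definition scale2 (c : K) (a : fs2) : fs2 := [seq (c * p.1.1, p.1.2, p.2) | p <- a].
Definition scale3 (c : K) (a : fs3) : fs3 :=
  [seq (c * p.1.1.1, p.1.1.2, p.1.2, p.2) | p <- a].

Definition one1 : fs1 := [:: (1, [::])].
Definition one2 : fs2 := [:: (1, [::], [::])].
Definition mono1 (w : word) : fs1 := [:: (1, w)].

Definition mul1 (a b : fs1) : fs1 :=
  [seq (p.1 * r.1, p.2 ++ r.2) | p <- a, r <- b].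

(* super product on F (x) F:
   (a1 (x) a2)(a3 (x) a4) = (-1)^{tau(a2) tau(a3)} a1 a3 (x) a2 a4 *)
Definition mul2 (a b : fs2) : fs2 :=
  [seq (p.1.1 * r.1.1 * (-1) ^+ (wpar p.2 && wpar r.1.2),
        p.1.2 ++ r.1.2, p.2 ++ r.2) | p <- a, r <- b].

(* defining relations of F(SP_q^{2|1}), written as r = lhs - rhs;
   s is the chosen square root q^{1/2} *)
Definition rels (q s : K) : seq fs1 :=
  [:: [:: (1, [:: Xp; Th]); (- q, [:: Th; Xp])];
      [:: (1, [:: Th; Xm]); (- q, [:: Xm; Th])];
      [:: (1, [:: Xm; Xp]); (- (q ^+ 2)^-1, [:: Xp; Xm])];
      [:: (1, [:: Th; Th]); (- (s * (q - 1)), [:: Xm; Xp])];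
      [:: (1, [:: Xp; Xpi]); (-1, [::])];
      [:: (1, [:: Xpi; Xp]); (-1, [::])] ].

Record igen := IGen { ig_c : K; ig_l : word; ig_r : fs1; ig_rr : word }.
Definition igen_val (e : igen) : fs1 :=
  scale1 (ig_c e) (mul1 (mul1 (mono1 (ig_l e)) (ig_r e)) (mono1 (ig_rr e))).

Definition place2 (x : fs1) (k : bool) (w : word) : fs2 :=
  if k then [seq (p.1, w, p.2) | p <- x] else [seq (p.1, p.2, w) | p <- x].
Definition place3 (x : fs1) (k : 'I_3) (w1 w2 : word) : fs3 :=
  match val k with
  | 0 => [seq (p.1, p.2, w1, w2) | p <- x]
  | 1 => [seq (p.1, w1, p.2, w2) | p <- x]
  | _ => [seq (p.1, w1, w2, p.2) | p <- x]
  end.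

(* membership in the ideal I (resp. I(x)F + F(x)I, resp. the kernel of
   F(x)F(x)F -> A(x)A(x)A) *)
Definition inI1 (q s : K) (a : fs1) : Prop :=
  exists l : seq igen, all (fun e => ig_r e \in rels q s) l /\
    feq1 a (flatten [seq igen_val e | e <- l]).
Definition inI2 (q s : K) (a : fs2) : Prop :=
  exists l : seq (igen * bool * word), all (fun e => ig_r e.1.1 \in rels q s) l /\
    feq2 a (flatten [seq place2 (igen_val e.1.1) e.1.2 e.2 | e <- l]).
Definition inI3 (q s : K) (a : fs3) : Prop :=
  exists l : seq (igen * 'I_3 * word * word),
    all (fun e => ig_r e.1.1.1 \in rels q s) l /\
    feq3 a (flatten [seq place3 (igen_val e.1.1.1) e.1.1.2 e.1.2 e.2 | e <- l]).

Definition eqA (q s : K) (a b : fs1) := inI1 q s (a ++ scale1 (-1) b).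
Definition eqA2 (q s : K) (a b : fs2) := inI2 q s (a ++ scale2 (-1) b).
Definition eqA3 (q s : K) (a b : fs3) := inI3 q s (a ++ scale3 (-1) b).

(* linear maps are given by their values on the basis words and extended
   linearly *)
Definition linD (D : word -> fs2) (a : fs1) : fs2 :=
  flatten [seq scale2 p.1 (D p.2) | p <- a].
Definition linE (E : word -> K) (a : fs1) : K := \sum_(p <- a) p.1 * E p.2.
Definition linS (S : word -> fs1) (a : fs1) : fs1 :=
  flatten [seq scale1 p.1 (S p.2) | p <- a].

Definition D_id (D : word -> fs2) (t : fs2) : fs3 :=
  flatten [seq [seq (p.1.1 * e.1.1, e.1.2, e.2, p.2) | e <- D p.1.2] | p <- t].
Definition id_D (D : word -> fs2) (t : fs2) : fs3 :=
  flatten [seq [seq (p.1.1 * e.1.1, p.1.2, e.1.2, e.2) | e <- D p.2] | p <- t].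
Definition m_E_id (E : word -> K) (t : fs2) : fs1 :=
  [seq (p.1.1 * E p.1.2, p.2) | p <- t].
Definition m_id_E (E : word -> K) (t : fs2) : fs1 :=
  [seq (p.1.1 * E p.2, p.1.2) | p <- t].
Definition m_S_id (S : word -> fs1) (t : fs2) : fs1 :=
  flatten [seq scale1 p.1.1 (mul1 (S p.1.2) (mono1 p.2)) | p <- t].
Definition m_id_S (S : word -> fs1) (t : fs2) : fs1 :=
  flatten [seq scale1 p.1.1 (mul1 (mono1 p.1.2) (S p.2)) | p <- t].

Definition homog (i : bool) (a : fs1) : bool := all (fun p => wpar p.2 == i) a.

Definition is_super_hopf (q s : K)
    (D : word -> fs2) (E : word -> K) (S : word -> fs1) : Prop :=
  [/\ [/\ (* well defined on the quotient A *)
      (forall a b, eqA q s a b -> eqA2 q s (linD D a) (linD D b)),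
      (forall a b, eqA q s a b -> linE E a = linE E b) &
      (forall a b, eqA q s a b -> eqA q s (linS S a) (linS S b))],
      (forall a, eqA3 q s (D_id D (linD D a)) (id_D D (linD D a))),
      (forall a, eqA q s (m_E_id E (linD D a)) a /\ eqA q s (m_id_E E (linD D a)) a),
      (forall a, eqA q s (m_S_id S (linD D a)) (scale1 (linE E a) one1) /\
                 eqA q s (m_id_S S (linD D a)) (scale1 (linE E a) one1)) &
      [/\ eqA2 q s (linD D one1) one2, linE E one1 = 1 & eqA q s (linS S one1) one1] /\
      [/\ (forall a b, eqA2 q s (linD D (mul1 a b)) (mul2 (linD D a) (linD D b))),
          (forall a b, linE E (mul1 a b) = linE E a * linE E b) &
          (forall (i j : bool) a b, homog i a -> homog j b ->
             eqA q s (linS S (mul1 a b))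
                     (scale1 ((-1) ^+ (i && j)) (mul1 (linS S b) (linS S a))))]].

End SuperHopf.

From Pilot Require Import Defs.
From HB Require Import structures.
From mathcomp Require Import all_boot all_order all_algebra complex.
From mathcomp Require Import ring.
Import Order.TTheory GRing.Theory Num.Theory.
Local Open Scope ring_scope.
Set Implicit Arguments. Unset Strict Implicit. Unset Printing Implicit Defensive.

(* Elements of the free algebra on x+, x-, x+^-1, theta and of its tensor
   powers are formal sums of words; they are compared through their pairings
   with arbitrary coefficient functions (ev1, ev2, ev3), which turns every
   identity into an identity between finite sums in K.  Delta and epsilon are
   extended multiplicatively from the generators (Delta into the super tensor
   product) and S super-anti-multiplicatively.  Each of the six relations is
   sent into the ideal by an explicit combination of relations; since the maps
   are (anti)multiplicative and the relations are homogeneous, the whole ideal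
   is sent into the ideal and the maps descend to the quotient.  The Hopf
   identities are checked on generators and propagate to all words along
   Delta (g w) = Delta g * Delta w. *)

(** * Formal sums and their pairings *)

Section SumByKey.
Variable R : pzSemiRingType.

Lemma sum_by_key (I T : eqType) (c : I -> R) (k : I -> T) (f : T -> R)
    (r : seq I) (s : seq T) :
  uniq s -> {subset map k r <= s} ->
  \sum_(i <- r) c i * f (k i) = \sum_(x <- s) (\sum_(i <- r | k i == x) c i) * f x.
Proof.
move=> s_uniq r_s.
under [RHS]eq_bigr => x _ do rewrite big_distrl /= big_mkcond /=.
rewrite exchange_big /=; apply: eq_big_seq => i ri.
rewrite (bigD1_seq (k i)) ?(r_s _ (map_f k ri)) //= eqxx big1 ?addr0 // => x.
by rewrite eq_sym => /negbTE ->.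
Qed.

Lemma eq_sum_by_key (I T : eqType) (c : I -> R) (k : I -> T) (r r' : seq I) :
  (forall x, \sum_(i <- r | k i == x) c i = \sum_(i <- r' | k i == x) c i) ->
  forall f, \sum_(i <- r) c i * f (k i) = \sum_(i <- r') c i * f (k i).
Proof.
move=> eq_c f; have s_uniq := undup_uniq (map k (r ++ r')).
have [r_s r'_s] : {subset map k r <= undup (map k (r ++ r'))} /\
                  {subset map k r' <= undup (map k (r ++ r'))}.
  by split=> x x_in; rewrite mem_undup map_cat mem_cat x_in ?orbT.
rewrite (sum_by_key _ _ s_uniq r_s) (sum_by_key _ _ s_uniq r'_s).
by apply: eq_bigr => x _; rewrite eq_c.
Qed.

End SumByKey.

Section Pairing.
Variable K : fieldType.
Implicit Types (a b : fs1 K) (t u : fs2 K).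

Definition sign (b : bool) : K := (-1) ^+ b.

Lemma sign_false : sign false = 1. Proof. exact: expr0. Qed.

Definition ev1 a (f : word -> K) : K := \sum_(p <- a) p.1 * f p.2.
Definition ev2 t (f : word -> word -> K) : K := \sum_(p <- t) p.1.1 * f p.1.2 p.2.
Definition ev3 (t : fs3 K) (f : word -> word -> word -> K) : K :=
  \sum_(p <- t) p.1.1.1 * f p.1.1.2 p.1.2 p.2.

Lemma feq1P a b : feq1 a b <-> forall f, ev1 a f = ev1 b f.
Proof.
split=> [eq_ab|eq_ev w]; first exact: (eq_sum_by_key (c := fst) (k := snd)).
have coef_ev (x : fs1 K) : Defs.coef1 x w = ev1 x (fun v => (v == w)%:R).
  rewrite /Defs.coef1 /ev1 big_mkcond; apply: eq_bigr => p _.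
  by case: eqP; rewrite ?mulr1 ?mulr0.
by rewrite !coef_ev eq_ev.
Qed.

Lemma feq2P t u : feq2 t u <-> forall f, ev2 t f = ev2 u f.
Proof.
split=> [eq_tu f|eq_ev v w].
  apply: (eq_sum_by_key (c := fun p : K * word * word => p.1.1)
    (k := fun p => (p.1.2, p.2)) _ (fun x => f x.1 x.2)) => -[v w].
  have coef_sum x : \sum_(p <- x | (p.1.2, p.2) == (v, w)) p.1.1 = coef2 x v w.
    by apply: eq_bigl => p; rewrite xpair_eqE.
  by rewrite !coef_sum eq_tu.
have coef_ev (x : fs2 K) : coef2 x v w = ev2 x (fun y z => ((y == v) && (z == w))%:R).
  rewrite /coef2 /ev2 big_mkcond; apply: eq_bigr => p _.
  by case: ifP; rewrite ?mulr1 ?mulr0.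
by rewrite !coef_ev eq_ev.
Qed.

Lemma ev_feq3 (t u : fs3 K) : (forall f, ev3 t f = ev3 u f) -> feq3 t u.
Proof.
have coef_ev (x : fs3 K) v w z : coef3 x v w z =
    ev3 x (fun v' w' z' => [&& v' == v, w' == w & z' == z]%:R).
  rewrite /coef3 /ev3 big_mkcond; apply: eq_bigr => p _.
  by case: ifP; rewrite ?mulr1 ?mulr0.
by move=> eq_ev v w z; rewrite !coef_ev eq_ev.
Qed.

Lemma eq_ev1 a f g : f =1 g -> ev1 a f = ev1 a g.
Proof. by move=> fg; apply: eq_bigr => p _; rewrite fg. Qed.
Lemma eq_ev1_in a f g : (forall p, p \in a -> f p.2 = g p.2) -> ev1 a f = ev1 a g.
Proof. by move=> fg; apply: eq_big_seq => p pa; rewrite fg. Qed.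
Lemma eq_ev2 t f g : (forall v w, f v w = g v w) -> ev2 t f = ev2 t g.
Proof. by move=> fg; apply: eq_bigr => p _; rewrite fg. Qed.
Lemma eq_ev2_in t f g :
  (forall p, p \in t -> f p.1.2 p.2 = g p.1.2 p.2) -> ev2 t f = ev2 t g.
Proof. by move=> fg; apply: eq_big_seq => p pt; rewrite fg. Qed.

Lemma ev1M a c f : ev1 a (fun v => c * f v) = c * ev1 a f.
Proof. by rewrite /ev1 mulr_sumr; apply: eq_bigr => p _; rewrite mulrCA. Qed.
Lemma ev2M t c f : ev2 t (fun v w => c * f v w) = c * ev2 t f.
Proof. by rewrite /ev2 mulr_sumr; apply: eq_bigr => p _; rewrite mulrCA. Qed.

Lemma ev1_nil f : ev1 [::] f = 0. Proof. exact: big_nil. Qed.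
Lemma ev2_nil f : ev2 [::] f = 0. Proof. exact: big_nil. Qed.
Lemma ev3_nil f : ev3 [::] f = 0. Proof. exact: big_nil. Qed.
Lemma ev1_cat a b f : ev1 (a ++ b) f = ev1 a f + ev1 b f.
Proof. exact: big_cat. Qed.
Lemma ev2_cat t u f : ev2 (t ++ u) f = ev2 t f + ev2 u f.
Proof. exact: big_cat. Qed.
Lemma ev3_cat (t u : fs3 K) f : ev3 (t ++ u) f = ev3 t f + ev3 u f.
Proof. exact: big_cat. Qed.
Lemma ev1_flatten (L : seq (fs1 K)) f : ev1 (flatten L) f = \sum_(x <- L) ev1 x f.
Proof. exact: big_flatten. Qed.
Lemma ev2_flatten (L : seq (fs2 K)) f : ev2 (flatten L) f = \sum_(x <- L) ev2 x f.
Proof. exact: big_flatten. Qed.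
Lemma ev3_flatten (L : seq (fs3 K)) f : ev3 (flatten L) f = \sum_(x <- L) ev3 x f.
Proof. exact: big_flatten. Qed.

Lemma ev1_scale a c f : ev1 (scale1 c a) f = c * ev1 a f.
Proof. by rewrite /ev1 big_map mulr_sumr; apply: eq_bigr => p _; rewrite mulrA. Qed.
Lemma ev2_scale t c f : ev2 (scale2 c t) f = c * ev2 t f.
Proof. by rewrite /ev2 big_map mulr_sumr; apply: eq_bigr => p _; rewrite mulrA. Qed.
Lemma ev3_scale (t : fs3 K) c f : ev3 (scale3 c t) f = c * ev3 t f.
Proof. by rewrite /ev3 big_map mulr_sumr; apply: eq_bigr => p _; rewrite mulrA. Qed.

Lemma ev1_mono w f : ev1 (mono1 K w) f = f w.
Proof. by rewrite /ev1 big_seq1 mul1r. Qed.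
Lemma ev1_one f : ev1 (one1 K) f = f [::].
Proof. by rewrite /ev1 big_seq1 mul1r. Qed.
Lemma ev2_one f : ev2 (one2 K) f = f [::] [::].
Proof. by rewrite /ev2 big_seq1 mul1r. Qed.

Lemma ev1_mul a b f : ev1 (mul1 a b) f = ev1 a (fun v => ev1 b (fun w => f (v ++ w))).
Proof.
rewrite /ev1 /mul1 big_allpairs_dep; apply: eq_bigr => p _.
by rewrite mulr_sumr; apply: eq_bigr => r _ /=; rewrite mulrA.
Qed.

Lemma ev2_mul t u f : ev2 (mul2 t u) f =
  ev2 t (fun v1 v2 => ev2 u (fun w1 w2 =>
    sign (wpar v2 && wpar w1) * f (v1 ++ w1) (v2 ++ w2))).
Proof.
rewrite /ev2 /mul2 big_allpairs_dep; apply: eq_bigr => p _.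
by rewrite mulr_sumr; apply: eq_bigr => r _ /=; rewrite /sign; ring.
Qed.

Lemma ev2_linD D a f : ev2 (linD D a) f = ev1 a (fun w => ev2 (D w) f).
Proof. by rewrite ev2_flatten big_map; apply: eq_bigr => p _; rewrite ev2_scale. Qed.
Lemma ev1_linS S a f : ev1 (linS S a) f = ev1 a (fun w => ev1 (S w) f).
Proof. by rewrite ev1_flatten big_map; apply: eq_bigr => p _; rewrite ev1_scale. Qed.

Lemma linE_ev1 E a : linE E a = ev1 a E. Proof. by []. Qed.

Lemma ev2_place x (k : bool) w f :
  ev2 (place2 x k w) f = ev1 x (fun v => if k then f w v else f v w).
Proof. by case: k; rewrite /ev2 big_map. Qed.

Lemma ev1_igen (e : igen K) f :
  ev1 (igen_val e) f = ig_c e * ev1 (ig_r e) (fun z => f (ig_l e ++ z ++ ig_rr e)).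
Proof.
rewrite ev1_scale !ev1_mul ev1_mono; congr (_ * _).
by apply: eq_ev1 => v; rewrite ev1_mono catA.
Qed.

Lemma ev3_D_id D t f :
  ev3 (D_id D t) f = ev2 t (fun v w => ev2 (D v) (fun x y => f x y w)).
Proof.
rewrite ev3_flatten big_map; apply: eq_bigr => p _.
by rewrite /ev3 big_map mulr_sumr; apply: eq_bigr => e _ /=; rewrite mulrA.
Qed.
Lemma ev3_id_D D t f :
  ev3 (id_D D t) f = ev2 t (fun v w => ev2 (D w) (fun x y => f v x y)).
Proof.
rewrite ev3_flatten big_map; apply: eq_bigr => p _.
by rewrite /ev3 big_map mulr_sumr; apply: eq_bigr => e _ /=; rewrite mulrA.
Qed.
Lemma ev1_m_E_id E t f : ev1 (m_E_id E t) f = ev2 t (fun v w => E v * f w).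
Proof. by rewrite /ev1 big_map; apply: eq_bigr => p _; rewrite mulrA. Qed.
Lemma ev1_m_id_E E t f : ev1 (m_id_E E t) f = ev2 t (fun v w => E w * f v).
Proof. by rewrite /ev1 big_map; apply: eq_bigr => p _; rewrite mulrA. Qed.
Lemma ev1_m_S_id S t f :
  ev1 (m_S_id S t) f = ev2 t (fun v w => ev1 (S v) (fun z => f (z ++ w))).
Proof.
rewrite ev1_flatten big_map; apply: eq_bigr => p _.
by rewrite ev1_scale ev1_mul; congr (_ * _); apply: eq_ev1 => z; rewrite ev1_mono.
Qed.
Lemma ev1_m_id_S S t f :
  ev1 (m_id_S S t) f = ev2 t (fun v w => ev1 (S w) (fun z => f (v ++ z))).
Proof.
rewrite ev1_flatten big_map; apply: eq_bigr => p _.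
by rewrite ev1_scale ev1_mul ev1_mono.
Qed.

Lemma ev1_sum (T : Type) a (r : seq T) (F : word -> T -> K) :
  ev1 a (fun v => \sum_(i <- r) F v i) = \sum_(i <- r) ev1 a (fun v => F v i).
Proof.
by rewrite /ev1; under eq_bigr => p _ do rewrite mulr_sumr; rewrite exchange_big.
Qed.
Lemma ev2_sum (T : Type) t (r : seq T) (F : word -> word -> T -> K) :
  ev2 t (fun v w => \sum_(i <- r) F v w i) = \sum_(i <- r) ev2 t (fun v w => F v w i).
Proof.
by rewrite /ev2; under eq_bigr => p _ do rewrite mulr_sumr; rewrite exchange_big.
Qed.

Lemma ev1_swap a b F :
  ev1 a (fun v => ev1 b (fun w => F v w)) = ev1 b (fun w => ev1 a (fun v => F v w)).
Proof.
rewrite {1}/ev1; under eq_bigr => p _ do rewrite mulr_sumr.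
rewrite exchange_big /=; apply: eq_bigr => r _; rewrite mulr_sumr.
by apply: eq_bigr => p _; rewrite mulrCA.
Qed.
Lemma ev12_swap a t F :
  ev1 a (fun v => ev2 t (fun x y => F v x y)) = ev2 t (fun x y => ev1 a (fun v => F v x y)).
Proof.
rewrite {1}/ev1; under eq_bigr => p _ do rewrite mulr_sumr.
rewrite exchange_big /=; apply: eq_bigr => r _; rewrite mulr_sumr.
by apply: eq_bigr => p _; rewrite mulrCA.
Qed.
Lemma ev2_swap t u F :
  ev2 t (fun v w => ev2 u (fun x y => F v w x y)) =
  ev2 u (fun x y => ev2 t (fun v w => F v w x y)).
Proof.
rewrite {1}/ev2; under eq_bigr => p _ do rewrite mulr_sumr.
rewrite exchange_big /=; apply: eq_bigr => r _; rewrite mulr_sumr.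
by apply: eq_bigr => p _; rewrite mulrCA.
Qed.

End Pairing.

Lemma wpar_cat u v : wpar (u ++ v) = wpar u (+) wpar v.
Proof. by rewrite /wpar count_cat oddD. Qed.
Lemma wpar_cons g w : wpar (g :: w) = (g == Th) (+) wpar w.
Proof. by rewrite /wpar /= oddD; case: (g == Th). Qed.

Ltac sign_cases := rewrite /sign;
  repeat match goal with
  | |- context [wpar ?w] => case: (wpar w)
  | |- context [?x == Th] => case: (x == Th)
  end;
  rewrite /=; ring.

(** * The ideal of relations and its extension to the tensor square *)

Arguments place2 : simpl never.

Section Ideal.
Variables (K : fieldType) (q s : K).
Implicit Types (a b c d x y : fs1 K).

Lemma inI1_ev x y : (forall f, ev1 x f = ev1 y f) -> inI1 q s x -> inI1 q s y.
Proof.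
move=> xy [L [relsL /feq1P xL]]; exists L; split=> //.
by apply/feq1P => f; rewrite -xy.
Qed.

Lemma inI1_0 x : (forall f, ev1 x f = 0) -> inI1 q s x.
Proof. by move=> x0; exists [::]; split=> //; apply/feq1P => f; rewrite x0 ev1_nil. Qed.

Lemma inI1_cat a b : inI1 q s a -> inI1 q s b -> inI1 q s (a ++ b).
Proof.
move=> [La [relsLa /feq1P aLa]] [Lb [relsLb /feq1P bLb]]; exists (La ++ Lb).
split; first by rewrite all_cat relsLa relsLb.
by apply/feq1P => f; rewrite map_cat flatten_cat !ev1_cat aLa bLb.
Qed.

Lemma inI1_flatten (T : Type) (P : pred T) (L : seq T) (F : T -> fs1 K) :
  all P L -> (forall e, P e -> inI1 q s (F e)) -> inI1 q s (flatten (map F L)).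
Proof.
move=> PL FP; elim: L PL => [_|e L IHL /andP [Pe PL]]; first by apply: inI1_0 => f; rewrite ev1_nil.
exact: inI1_cat (FP e Pe) (IHL PL).
Qed.

Lemma inI1_scale k a : inI1 q s a -> inI1 q s (scale1 k a).
Proof.
move=> [L [relsL /feq1P aL]].
exists [seq IGen (k * ig_c e) (ig_l e) (ig_r e) (ig_rr e) | e <- L]; split.
  by rewrite all_map; apply: sub_all relsL => e.
apply/feq1P => f; rewrite ev1_scale aL !ev1_flatten -map_comp big_map mulr_sumr.
by rewrite big_map; apply: eq_bigr => e _ /=; rewrite !ev1_igen /= mulrA.
Qed.

Lemma inI1_mull a x : inI1 q s x -> inI1 q s (mul1 a x).
Proof.
move=> [L [relsL /feq1P xL]].
exists [seq IGen (p.1 * ig_c e) (p.2 ++ ig_l e) (ig_r e) (ig_rr e) | e <- L, p <- a].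
split.
  elim: L relsL {xL} => [//|e L IHL] /= /andP [rel_e relsL].
  by rewrite all_cat IHL // andbT all_map; apply/allP => p _ /=.
apply/feq1P => f; rewrite ev1_mul.
under eq_ev1 => v do rewrite xL ev1_flatten big_map.
rewrite ev1_sum ev1_flatten big_map big_allpairs_dep; apply: eq_bigr => e _.
under eq_ev1 => v do rewrite ev1_igen.
under [RHS]eq_bigr => p _ do rewrite ev1_igen.
rewrite {1}/ev1; apply: eq_bigr => p _ /=; rewrite -mulrA.
by congr (_ * (_ * _)); apply: eq_ev1 => z; rewrite !catA.
Qed.

Lemma inI1_mulr x b : inI1 q s x -> inI1 q s (mul1 x b).
Proof.
move=> [L [relsL /feq1P xL]].
exists [seq IGen (ig_c e * p.1) (ig_l e) (ig_r e) (ig_rr e ++ p.2) | e <- L, p <- b].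
split.
  elim: L relsL {xL} => [//|e L IHL] /= /andP [rel_e relsL].
  by rewrite all_cat IHL // andbT all_map; apply/allP => p _ /=.
apply/feq1P => f; rewrite ev1_mul xL ev1_flatten big_map.
rewrite ev1_flatten big_map big_allpairs_dep; apply: eq_bigr => e _.
under [RHS]eq_bigr => p _ do rewrite ev1_igen.
rewrite ev1_igen ev1_swap -ev1M {1}/ev1; apply: eq_bigr => p _ /=.
rewrite mulrA [p.1 * _]mulrC; congr (_ * _); apply: eq_ev1 => z.
by rewrite -!catA.
Qed.

Lemma inI1_mullr a x b : inI1 q s x -> inI1 q s (mul1 (mul1 a x) b).
Proof. by move=> Ix; apply/inI1_mulr/inI1_mull. Qed.

Lemma eqA_ev a b : (forall f, ev1 a f = ev1 b f) -> eqA q s a b.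
Proof. by move=> ab; apply: inI1_0 => f; rewrite ev1_cat ev1_scale ab; ring. Qed.

Lemma eqA_trans b a c : eqA q s a b -> eqA q s b c -> eqA q s a c.
Proof.
move=> ab bc; apply: inI1_ev (inI1_cat ab bc) => f.
by rewrite !(ev1_cat, ev1_scale); ring.
Qed.

Lemma eqA_evl a a' b : (forall f, ev1 a f = ev1 a' f) -> eqA q s a b -> eqA q s a' b.
Proof. by move=> aa'; apply: eqA_trans; apply: eqA_ev => f; rewrite aa'. Qed.
Lemma eqA_evr a b b' : (forall f, ev1 b f = ev1 b' f) -> eqA q s a b -> eqA q s a b'.
Proof. by move=> bb' ab; apply: eqA_trans ab _; apply: eqA_ev. Qed.

Lemma eqA_cat a b c d : eqA q s a b -> eqA q s c d -> eqA q s (a ++ c) (b ++ d).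
Proof.
move=> ab cd; apply: inI1_ev (inI1_cat ab cd) => f.
by rewrite !(ev1_cat, ev1_scale); ring.
Qed.

Lemma eqA_scale k a b : eqA q s a b -> eqA q s (scale1 k a) (scale1 k b).
Proof.
move=> ab; apply: inI1_ev (inI1_scale k ab) => f.
by rewrite !(ev1_cat, ev1_scale); ring.
Qed.

Lemma eqA_linS (S S' : word -> fs1 K) a :
  (forall w, eqA q s (S w) (S' w)) -> eqA q s (linS S a) (linS S' a).
Proof.
move=> SS'; elim: a => [|p a IHa] /=; first exact: eqA_ev.
exact/eqA_cat/IHa/eqA_scale.
Qed.

(* The relations are homogeneous; this makes the signs of the super tensor
   product compatible with the ideal. *)
Definition rel_par (r : fs1 K) : bool := if r is t :: _ then wpar t.2 else false.

Lemma rels_homog r : r \in rels q s -> forall z, z \in r -> wpar z.2 = rel_par r.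
Proof.
rewrite /rels !inE.
by repeat (case/orP=> [/eqP -> z|]; first by rewrite !inE => /orP [] /eqP ->);
  move/eqP => -> z; rewrite !inE => /orP [] /eqP ->.
Qed.

Definition igen_par (e : igen K) : bool :=
  wpar (ig_l e) (+) rel_par (ig_r e) (+) wpar (ig_rr e).

Lemma igen_homog (e : igen K) : ig_r e \in rels q s ->
  forall z, z \in ig_r e -> wpar (ig_l e ++ z.2 ++ ig_rr e) = igen_par e.
Proof. by move=> rel_e z ze; rewrite !wpar_cat (rels_homog rel_e ze) addbA. Qed.

Lemma inI2_ev t u : (forall f, ev2 t f = ev2 u f) -> inI2 q s t -> inI2 q s u.
Proof.
move=> tu [L [relsL /feq2P tL]]; exists L; split=> //.
by apply/feq2P => f; rewrite -tu.
Qed.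

Lemma inI2_0 t : (forall f, ev2 t f = 0) -> inI2 q s t.
Proof. by move=> t0; exists [::]; split=> //; apply/feq2P => f; rewrite t0 ev2_nil. Qed.

Lemma inI2_cat t u : inI2 q s t -> inI2 q s u -> inI2 q s (t ++ u).
Proof.
move=> [Lt [relsLt /feq2P tLt]] [Lu [relsLu /feq2P uLu]]; exists (Lt ++ Lu).
split; first by rewrite all_cat relsLt relsLu.
by apply/feq2P => f; rewrite map_cat flatten_cat !ev2_cat tLt uLu.
Qed.

Lemma inI2_flatten (T : Type) (P : pred T) (L : seq T) (F : T -> fs2 K) :
  all P L -> (forall e, P e -> inI2 q s (F e)) -> inI2 q s (flatten (map F L)).
Proof.
move=> PL FP; elim: L PL => [_|e L IHL /andP [Pe PL]]; first by apply: inI2_0 => f; rewrite ev2_nil.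
exact: inI2_cat (FP e Pe) (IHL PL).
Qed.

Lemma inI2_scale k t : inI2 q s t -> inI2 q s (scale2 k t).
Proof.
move=> [L [relsL /feq2P tL]].
exists [seq (IGen (k * ig_c e.1.1) (ig_l e.1.1) (ig_r e.1.1) (ig_rr e.1.1), e.1.2, e.2)
       | e <- L]; split.
  by rewrite all_map; apply: sub_all relsL => e.
apply/feq2P => f; rewrite ev2_scale tL !ev2_flatten -map_comp big_map mulr_sumr big_map.
by apply: eq_bigr => e _ /=; rewrite !ev2_place !ev1_igen /= mulrA.
Qed.

Lemma inI2_mull_igen t (e : igen K) k w :
  ig_r e \in rels q s -> inI2 q s (mul2 t (place2 (igen_val e) k w)).
Proof.
move=> rel_e; case: k.
- exists [seq (IGen (p.1.1 * sign K (wpar p.2 && wpar w) * ig_c e) (p.2 ++ ig_l e)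
                (ig_r e) (ig_rr e), true, p.1.2 ++ w) | p <- t].
  split; first by rewrite all_map; apply/allP => p _ /=.
  apply/feq2P => f; rewrite ev2_mul ev2_flatten -map_comp big_map {1}/ev2.
  apply: eq_bigr => p _ /=; rewrite !ev2_place !ev1_igen /= -!mulrA; congr (_ * _).
  by rewrite ev1M mulrCA; congr (_ * (_ * _)); apply: eq_ev1 => z; rewrite catA.
- exists [seq (IGen (p.1.1 * sign K (wpar p.2 && igen_par e) * ig_c e) (p.1.2 ++ ig_l e)
                (ig_r e) (ig_rr e), false, p.2 ++ w) | p <- t].
  split; first by rewrite all_map; apply/allP => p _ /=.
  apply/feq2P => f; rewrite ev2_mul ev2_flatten -map_comp big_map {1}/ev2.
  apply: eq_bigr => p _ /=; rewrite !ev2_place !ev1_igen /= -!mulrA; congr (_ * _).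
  rewrite [RHS]mulrCA -[X in _ = _ * X]ev1M; congr (_ * _); apply: eq_ev1_in => z ze.
  by rewrite (igen_homog rel_e ze) !catA.
Qed.

Lemma inI2_mulr_igen t (e : igen K) k w :
  ig_r e \in rels q s -> inI2 q s (mul2 (place2 (igen_val e) k w) t).
Proof.
move=> rel_e; case: k.
- exists [seq (IGen (ig_c e * sign K (igen_par e && wpar p.1.2) * p.1.1) (ig_l e)
                (ig_r e) (ig_rr e ++ p.2), true, w ++ p.1.2) | p <- t].
  split; first by rewrite all_map; apply/allP => p _ /=.
  apply/feq2P => f; rewrite ev2_mul ev2_flatten -map_comp big_map ev2_place ev1_igen.
  rewrite ev12_swap -ev2M {1}/ev2; apply: eq_bigr => p _ /=.
  rewrite ev2_place ev1_igen /= -!ev1M; apply: eq_ev1_in => z ze.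
  by rewrite (igen_homog rel_e ze) -!catA; ring.
- exists [seq (IGen (ig_c e * sign K (wpar w && wpar p.1.2) * p.1.1) (ig_l e)
                (ig_r e) (ig_rr e ++ p.1.2), false, w ++ p.2) | p <- t].
  split; first by rewrite all_map; apply/allP => p _ /=.
  apply/feq2P => f; rewrite ev2_mul ev2_flatten -map_comp big_map ev2_place ev1_igen.
  rewrite ev12_swap -ev2M {1}/ev2; apply: eq_bigr => p _ /=.
  rewrite ev2_place ev1_igen /= -!ev1M; apply: eq_ev1 => z.
  by rewrite -!catA; ring.
Qed.

Lemma inI2_mull t u : inI2 q s u -> inI2 q s (mul2 t u).
Proof.
move=> [L [relsL /feq2P uL]].
apply: (@inI2_ev (flatten [seq mul2 t (place2 (igen_val e.1.1) e.1.2 e.2) | e <- L])).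
  move=> f; rewrite ev2_mul ev2_flatten big_map.
  under [RHS]eq_ev2 => v w do rewrite uL ev2_flatten big_map.
  by rewrite ev2_sum; apply: eq_bigr => e _; rewrite ev2_mul.
by apply: (inI2_flatten relsL) => e rel_e; apply: inI2_mull_igen.
Qed.

Lemma inI2_mulr t u : inI2 q s t -> inI2 q s (mul2 t u).
Proof.
move=> [L [relsL /feq2P tL]].
apply: (@inI2_ev (flatten [seq mul2 (place2 (igen_val e.1.1) e.1.2 e.2) u | e <- L])).
  move=> f; rewrite ev2_mul ev2_flatten big_map tL ev2_flatten big_map.
  by apply: eq_bigr => e _; rewrite ev2_mul.
by apply: (inI2_flatten relsL) => e rel_e; apply: inI2_mulr_igen.
Qed.

Lemma eqA2_ev t u : (forall f, ev2 t f = ev2 u f) -> eqA2 q s t u.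
Proof. by move=> tu; apply: inI2_0 => f; rewrite ev2_cat ev2_scale tu; ring. Qed.

End Ideal.

Section StructureMaps.
Variable K : fieldType.
Implicit Types (t : fs2 K) (u v w : word).

Definition coprod_gen (g : gen) : fs2 K :=
  match g with
  | Xp => [:: (1, [:: Xp], [:: Xp])]
  | Xpi => [:: (1, [:: Xpi], [:: Xpi])]
  | Th => [:: (1, [:: Th], [::]); (1, [::], [:: Th])]
  | Xm => [:: (1, [:: Xpi], [:: Xm]); (1, [:: Xm], [:: Xpi])]
  end.
Definition coprod (w : word) : fs2 K := foldr (fun g t => mul2 (coprod_gen g) t) (one2 K) w.

Definition counit_gen (g : gen) : K := if (g == Xp) || (g == Xpi) then 1 else 0.
Definition counit (w : word) : K := \prod_(g <- w) counit_gen g.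

Definition antipode_gen (g : gen) : fs1 K :=
  match g with
  | Xp => [:: (1, [:: Xpi])]
  | Xpi => [:: (1, [:: Xp])]
  | Th => [:: (-1, [:: Th])]
  | Xm => [:: (-1, [:: Xp; Xm; Xp])]
  end.
Fixpoint antipode (w : word) : fs1 K :=
  match w with
  | [::] => one1 K
  | g :: w' => scale1 (sign K ((g == Th) && wpar w')) (mul1 (antipode w') (antipode_gen g))
  end.

Lemma ev2_mulA t1 t2 t3 f : ev2 (mul2 (mul2 t1 t2) t3) f = ev2 (mul2 t1 (mul2 t2 t3)) f.
Proof.
rewrite !ev2_mul; apply: eq_ev2 => a1 a2; rewrite ev2_mul.
apply: eq_ev2 => b1 b2; rewrite -ev2M; apply: eq_ev2 => c1 c2.
by rewrite !catA !wpar_cat; sign_cases.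
Qed.

Lemma ev2_mul1l t f : ev2 (mul2 (one2 K) t) f = ev2 t f.
Proof. by rewrite ev2_mul ev2_one; apply: eq_ev2 => v w; rewrite mul1r. Qed.

Lemma eq_ev2_mulr t t1 t2 f : (forall h, ev2 t1 h = ev2 t2 h) ->
  ev2 (mul2 t t1) f = ev2 (mul2 t t2) f.
Proof. by move=> t12; rewrite !ev2_mul; apply: eq_ev2 => v w; rewrite t12. Qed.

Lemma ev2_mul_linD (D : word -> fs2 K) t r f :
  ev2 (mul2 t (linD D r)) f = ev1 r (fun z => ev2 (mul2 t (D z)) f).
Proof.
under [RHS]eq_ev1 => z do rewrite ev2_mul.
by rewrite ev12_swap ev2_mul; apply: eq_ev2 => v w; rewrite ev2_linD.
Qed.

Lemma ev2_mul3_linD (D : word -> fs2 K) t1 r t2 f :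
  ev2 (mul2 (mul2 t1 (linD D r)) t2) f =
  ev1 r (fun z => ev2 (mul2 (mul2 t1 (D z)) t2) f).
Proof. by rewrite ev2_mul ev2_mul_linD; apply: eq_ev1 => z; rewrite [RHS]ev2_mul. Qed.

Lemma coprod_nil : coprod [::] = one2 K. Proof. by []. Qed.

Lemma coprod_cat u v f : ev2 (coprod (u ++ v)) f = ev2 (mul2 (coprod u) (coprod v)) f.
Proof.
elim: u f => [|g u IHu] f /=; first by rewrite ev2_mul1l.
by rewrite ev2_mulA; apply: eq_ev2_mulr.
Qed.

Lemma coprod_gen_par g p : p \in coprod_gen g -> wpar p.1.2 (+) wpar p.2 = (g == Th).
Proof.
by case: g; rewrite !inE; repeat (case/orP=> [/eqP -> //|]); move/eqP => ->.
Qed.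

Lemma coprod_par w p : p \in coprod w -> wpar p.1.2 (+) wpar p.2 = wpar w.
Proof.
elim: w p => [|g w IHw] p /=; first by rewrite inE => /eqP ->.
case/allpairsP => -[x y] /= [x_g y_w ->] /=.
rewrite wpar_cons !wpar_cat -(coprod_gen_par x_g) -(IHw _ y_w).
by case: (wpar x.1.2); case: (wpar x.2); case: (wpar y.1.2); case: (wpar y.2).
Qed.

Lemma counit_cat u v : counit (u ++ v) = counit u * counit v.
Proof. exact: big_cat. Qed.
Lemma counit_cons g w : counit (g :: w) = counit_gen g * counit w.
Proof. exact: big_cons. Qed.

Lemma counit_odd w : wpar w -> counit w = 0.
Proof.
elim: w => [//|g w IHw]; rewrite wpar_cons counit_cons.
by case: g => /= w_odd; rewrite /counit_gen /= ?mul0r // IHw ?mulr0.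
Qed.

Lemma counit_signl w b : counit w * sign K (wpar w && b) = counit w.
Proof.
case w_par: (wpar w); first by rewrite counit_odd ?mul0r.
by rewrite sign_false mulr1.
Qed.
Lemma counit_signr w b : counit w * sign K (b && wpar w) = counit w.
Proof. by rewrite andbC counit_signl. Qed.

Lemma antipode_cat u v f :
  ev1 (antipode (u ++ v)) f =
  sign K (wpar u && wpar v) * ev1 (mul1 (antipode v) (antipode u)) f.
Proof.
elim: u v f => [|g u IHu] v f /=.
  by rewrite mul1r ev1_mul; apply: eq_ev1 => x; rewrite ev1_one cats0.
rewrite ev1_scale ev1_mul IHu ev1_mul ev1_mul.
under [in RHS]eq_ev1 => x do rewrite ev1_scale ev1_mul.
rewrite -[RHS]ev1M mulrA -ev1M; apply: eq_ev1 => x; rewrite mulrA; congr (_ * _).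
  by rewrite wpar_cons wpar_cat; sign_cases.
by apply: eq_ev1 => y; apply: eq_ev1 => z; rewrite catA.
Qed.

End StructureMaps.

(** * The structure maps descend to the quotient *)

Ltac expand_ev :=
  rewrite ?ev2_linD ?ev1_linS ?ev1_m_S_id ?ev1_m_id_S ?ev2_flatten ?ev1_flatten ?ev1_cat
    ?ev1_scale /= ?big_cons ?big_nil ?ev2_place ?ev1_igen /=;
  rewrite /ev1 /ev2 /= ?big_cons ?big_nil /=; rewrite /sign /counit_gen /=; ring.

Section WellDefined.
Variables (K : fieldType) (q s : K).
Notation coprod := (coprod K).
Notation counit := (counit K).
Notation antipode := (antipode K).

Definition rel (i : nat) : fs1 K := nth [::] (rels q s) i.

Lemma rel_in i : (i < 6)%N -> rel i \in rels q s.
Proof. by move=> i_lt; apply: mem_nth. Qed.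

Lemma relsP r : r \in rels q s -> exists2 i, (i < 6)%N & r = rel i.
Proof.
move=> r_rels; exists (index r (rels q s)); last by rewrite /rel nth_index.
by rewrite -[6%N]/(size (rels q s)) index_mem.
Qed.

(* Explicit expressions of the images of the six relations as combinations of
   relations; each witness triple [(IGen c l r m, k, w)] stands for
   [c l r m] placed in tensor slot [k] next to [w]. *)
Lemma coprod_rel i : (i < 6)%N -> inI2 q s (linD coprod (rel i)).
Proof.
case: i => [|[|[|[|[|[|//]]]]]] _.
- exists [:: (IGen 1 [::] (rel 0) [::], false, [:: Xp]);
             (IGen 1 [::] (rel 0) [::], true, [:: Xp])].
  by split; [rewrite /= !rel_in | apply/feq2P => f; expand_ev].
- exists [:: (IGen 1 [:: Xpi] (rel 0) [:: Xpi], false, [:: Xm]);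
             (IGen (-1) [::] (rel 5) [:: Th; Xpi], false, [:: Xm]);
             (IGen q [:: Xpi; Th] (rel 4) [::], false, [:: Xm]);
             (IGen 1 [:: Xpi] (rel 0) [:: Xpi], true, [:: Xm]);
             (IGen (-1) [::] (rel 5) [:: Th; Xpi], true, [:: Xm]);
             (IGen q [:: Xpi; Th] (rel 4) [::], true, [:: Xm]);
             (IGen 1 [::] (rel 1) [::], false, [:: Xpi]);
             (IGen 1 [::] (rel 1) [::], true, [:: Xpi])].
  by split; [rewrite /= !rel_in | apply/feq2P => f; expand_ev].
- exists [:: (IGen 1 [::] (rel 2) [::], true, [::]);
             (IGen 1 [::] (rel 2) [::], false, [::]);
             (IGen 1 [::] (rel 5) [::], false, [:: Xm; Xp]);
             (IGen 1 [::] (rel 5) [::], true, [:: Xm; Xp]);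
             (IGen (- (q ^+ 2)^-1) [::] (rel 4) [::], false, [:: Xp; Xm]);
             (IGen (- (q ^+ 2)^-1) [::] (rel 4) [::], true, [:: Xp; Xm])].
  by split; [rewrite /= !rel_in | apply/feq2P => f; expand_ev].
- exists [:: (IGen 1 [::] (rel 3) [::], false, [::]);
             (IGen 1 [::] (rel 3) [::], true, [::]);
             (IGen (- (s * (q - 1))) [::] (rel 5) [::], false, [:: Xm; Xp]);
             (IGen (- (s * (q - 1))) [::] (rel 5) [::], true, [:: Xm; Xp])].
  by split; [rewrite /= !rel_in | apply/feq2P => f; expand_ev].
- exists [:: (IGen 1 [::] (rel 4) [::], false, [:: Xp; Xpi]);
             (IGen 1 [::] (rel 4) [::], true, [::])].
  by split; [rewrite /= !rel_in | apply/feq2P => f; expand_ev].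
- exists [:: (IGen 1 [::] (rel 5) [::], false, [:: Xpi; Xp]);
             (IGen 1 [::] (rel 5) [::], true, [::])].
  by split; [rewrite /= !rel_in | apply/feq2P => f; expand_ev].
Qed.

Lemma antipode_rel i : (i < 6)%N -> inI1 q s (linS antipode (rel i)).
Proof.
case: i => [|[|[|[|[|[|//]]]]]] _.
- exists [:: IGen (-1) [:: Xpi] (rel 0) [:: Xpi]; IGen 1 [::] (rel 5) [:: Th; Xpi];
             IGen (-q) [:: Xpi; Th] (rel 4) [::]].
  by split; [rewrite /= !rel_in | apply/feq1P => f; expand_ev].
- exists [:: IGen 1 [:: Xp; Xm] (rel 0) [::]; IGen 1 [::] (rel 0) [:: Xm; Xp];
             IGen (-1) [:: Xp] (rel 1) [:: Xp]].
  by split; [rewrite /= !rel_in | apply/feq1P => f; expand_ev].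
- exists [:: IGen (-1) [::] (rel 5) [:: Xm; Xp]; IGen ((q ^+ 2)^-1) [:: Xp; Xm] (rel 4) [::];
             IGen (-1) [::] (rel 2) [::]].
  by split; [rewrite /= !rel_in | apply/feq1P => f; expand_ev].
- exists [:: IGen (-1) [::] (rel 3) [::]; IGen (s * (q - 1)) [::] (rel 5) [:: Xm; Xp]].
  by split; [rewrite /= !rel_in | apply/feq1P => f; expand_ev].
- exists [:: IGen 1 [::] (rel 4) [::]].
  by split; [rewrite /= !rel_in | apply/feq1P => f; expand_ev].
- exists [:: IGen 1 [::] (rel 5) [::]].
  by split; [rewrite /= !rel_in | apply/feq1P => f; expand_ev].
Qed.

Lemma counit_rel r : r \in rels q s -> ev1 r counit = 0.
Proof.
case/relsP => i + ->; case: i => [|[|[|[|[|[|//]]]]]] _;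
  rewrite /ev1 /counit /= ?big_cons ?big_nil /counit_gen /=; ring.
Qed.

Lemma coprod_igen (e : igen K) : ig_r e \in rels q s -> inI2 q s (linD coprod (igen_val e)).
Proof.
move=> rel_e.
apply: (@inI2_ev _ _ _ (scale2 (ig_c e)
    (mul2 (mul2 (coprod (ig_l e)) (linD coprod (ig_r e))) (coprod (ig_rr e))))).
  move=> f; rewrite ev2_scale ev2_linD ev1_igen ev2_mul3_linD; congr (_ * _).
  apply: eq_ev1 => z; rewrite ev2_mulA coprod_cat; apply: eq_ev2_mulr => h.
  by rewrite coprod_cat.
apply/inI2_scale/inI2_mulr/inI2_mull.
by case/relsP: rel_e => i i_lt ->; apply: coprod_rel.
Qed.

Lemma coprod_ideal x : inI1 q s x -> inI2 q s (linD coprod x).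
Proof.
move=> [L [relsL /feq1P xL]].
apply: (@inI2_ev _ _ _ (flatten [seq linD coprod (igen_val e) | e <- L])).
  move=> f; rewrite ev2_flatten big_map ev2_linD xL ev1_flatten big_map.
  by apply: eq_bigr => e _; rewrite ev2_linD.
by apply: (inI2_flatten relsL) => e; apply: coprod_igen.
Qed.

Lemma counit_ideal x : inI1 q s x -> ev1 x counit = 0.
Proof.
move=> [L [relsL /feq1P ->]]; rewrite ev1_flatten big_map.
elim: L relsL => [_|e L IHL /andP [rel_e relsL]]; first exact: big_nil.
rewrite big_cons IHL // addr0 ev1_igen.
transitivity (ig_c e * (counit (ig_l e) * counit (ig_rr e) * ev1 (ig_r e) counit)).
  by congr (_ * _); rewrite -ev1M; apply: eq_ev1 => z; rewrite !counit_cat; ring.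
by rewrite counit_rel // !mulr0.
Qed.

Lemma antipode_igen (e : igen K) :
  ig_r e \in rels q s -> inI1 q s (linS antipode (igen_val e)).
Proof.
move=> rel_e.
apply: (@inI1_ev _ _ _ (scale1 (ig_c e * (sign K (wpar (ig_l e) &&
       (rel_par (ig_r e) (+) wpar (ig_rr e))) * sign K (rel_par (ig_r e) && wpar (ig_rr e))))
   (mul1 (mul1 (antipode (ig_rr e)) (linS antipode (ig_r e))) (antipode (ig_l e))))).
  move=> f; rewrite ev1_linS ev1_igen ev1_scale -mulrA; congr (_ * _).
  rewrite !ev1_mul; under eq_ev1 => a do rewrite ev1_linS.
  rewrite ev1_swap -ev1M; apply: eq_ev1_in => z z_r.
  by rewrite antipode_cat ev1_mul antipode_cat ev1_mul wpar_cat (rels_homog rel_e z_r) mulrA.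
apply/inI1_scale/inI1_mullr.
by case/relsP: rel_e => i i_lt ->; apply: antipode_rel.
Qed.

Lemma antipode_ideal x : inI1 q s x -> inI1 q s (linS antipode x).
Proof.
move=> [L [relsL /feq1P xL]].
apply: (@inI1_ev _ _ _ (flatten [seq linS antipode (igen_val e) | e <- L])).
  move=> f; rewrite ev1_flatten big_map ev1_linS xL ev1_flatten big_map.
  by apply: eq_bigr => e _; rewrite ev1_linS.
by apply: (inI1_flatten relsL) => e; apply: antipode_igen.
Qed.

End WellDefined.

(** * The Hopf axioms on words *)

Section HopfIdentities.
Variables (K : fieldType) (q s : K).
Notation coprod := (coprod K).
Notation counit := (counit K).
Notation antipode := (antipode K).

Lemma coassoc_gen g (F : word -> word -> word -> K) :
  ev2 (coprod_gen K g) (fun v w => ev2 (coprod v) (fun x y => F x y w)) =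
  ev2 (coprod_gen K g) (fun v w => ev2 (coprod w) (fun x y => F v x y)).
Proof. by case: g; rewrite /ev2 /= ?big_cons ?big_nil /= /sign /=; ring. Qed.

Lemma coassoc_word w F :
  ev2 (coprod w) (fun v u => ev2 (coprod v) (fun x y => F x y u)) =
  ev2 (coprod w) (fun v u => ev2 (coprod u) (fun x y => F v x y)).
Proof.
elim: w F => [|g w IHw] F; first by rewrite /= !ev2_one.
rewrite /= !ev2_mul.
pose G a2 c1 c2 := ev2 (coprod w) (fun b1 b2 => ev2 (coprod b2) (fun e1 e2 =>
   sign K (wpar a2 && (wpar b1 (+) wpar e1)) *
   (sign K (wpar c2 && wpar b1) * F (c1 ++ b1) (c2 ++ e1) (a2 ++ e2)))).
transitivity (ev2 (coprod_gen K g) (fun a1 a2 => ev2 (coprod a1) (fun c1 c2 => G a2 c1 c2))).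
  apply: eq_ev2 => a1 a2.
  transitivity (ev2 (coprod a1) (fun c1 c2 => ev2 (coprod w) (fun b1 b2 =>
     ev2 (coprod b1) (fun d1 d2 => sign K (wpar a2 && (wpar d1 (+) wpar d2)) *
     (sign K (wpar c2 && wpar d1) * F (c1 ++ d1) (c2 ++ d2) (a2 ++ b2)))))); last first.
    by apply: eq_ev2 => c1 c2; rewrite /G; apply: IHw.
  rewrite [RHS]ev2_swap; apply: eq_ev2 => b1 b2.
  rewrite coprod_cat ev2_mul -ev2M; apply: eq_ev2 => c1 c2.
  rewrite -ev2M; apply: eq_ev2_in => p p_b1.
  by rewrite (coprod_par p_b1) !mulrA.
rewrite coassoc_gen; apply: eq_ev2 => a1 a2; rewrite /G.
rewrite ev2_swap; apply: eq_ev2 => b1 b2.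
rewrite coprod_cat ev2_mul -ev2M; apply: eq_ev2_in => p p_b2.
rewrite -ev2M; apply: eq_ev2 => e1 e2.
by rewrite -(coprod_par p_b2); sign_cases.
Qed.

Lemma counit_coprod_gen g (F : word -> K) :
  ev2 (coprod_gen K g) (fun v w => counit v * F w) = F [:: g] /\
  ev2 (coprod_gen K g) (fun v w => counit w * F v) = F [:: g].
Proof. by case: g; rewrite /ev2 /counit /= ?big_cons ?big_nil /counit_gen /=; split; ring. Qed.

Lemma counitl_word w F : ev2 (coprod w) (fun v u => counit v * F u) = F w.
Proof.
elim: w F => [|g w IHw] F; first by rewrite /= ev2_one /counit big_nil mul1r.
rewrite /= ev2_mul -[RHS](counit_coprod_gen g (fun v => F (v ++ w))).1.
apply: eq_ev2 => a1 a2; rewrite -[F (a2 ++ w)](IHw (fun v => F (a2 ++ v))) -ev2M.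
apply: eq_ev2 => b1 b2.
by rewrite counit_cat -[in RHS](counit_signr K b1 (wpar a2)); ring.
Qed.

Lemma counitr_word w F : ev2 (coprod w) (fun v u => counit u * F v) = F w.
Proof.
elim: w F => [|g w IHw] F; first by rewrite /= ev2_one /counit big_nil mul1r.
rewrite /= ev2_mul -[RHS](counit_coprod_gen g (fun v => F (v ++ w))).2.
apply: eq_ev2 => a1 a2; rewrite -[F (a1 ++ w)](IHw (fun v => F (a1 ++ v))) -ev2M.
apply: eq_ev2 => b1 b2.
by rewrite counit_cat -[in RHS](counit_signl K a2 (wpar b1)); ring.
Qed.

Lemma antipodel_gen g :
  eqA q s (m_S_id antipode (coprod_gen K g)) (scale1 (counit_gen K g) (one1 K)).
Proof.
case: g.
- by exists [:: IGen 1 [::] (rel q s 5) [::]]; split; [rewrite /= !rel_in | apply/feq1P => f; expand_ev].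
- by exists [:: IGen (-1) [:: Xp; Xm] (rel q s 4) [::]]; split; [rewrite /= !rel_in | apply/feq1P => f; expand_ev].
- by exists [:: IGen 1 [::] (rel q s 4) [::]]; split; [rewrite /= !rel_in | apply/feq1P => f; expand_ev].
- by exists [::]; split; [| apply/feq1P => f; expand_ev].
Qed.

Lemma antipoder_gen g :
  eqA q s (m_id_S antipode (coprod_gen K g)) (scale1 (counit_gen K g) (one1 K)).
Proof.
case: g.
- by exists [:: IGen 1 [::] (rel q s 4) [::]]; split; [rewrite /= !rel_in | apply/feq1P => f; expand_ev].
- by exists [:: IGen (-1) [::] (rel q s 5) [:: Xm; Xp]]; split; [rewrite /= !rel_in | apply/feq1P => f; expand_ev].
- by exists [:: IGen 1 [::] (rel q s 5) [::]]; split; [rewrite /= !rel_in | apply/feq1P => f; expand_ev].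
- by exists [::]; split; [| apply/feq1P => f; expand_ev].
Qed.

(* m (S (x) id) Delta (g w) is a sandwich around m (S (x) id) Delta g, and
   m (id (x) S) Delta (g w) one around m (id (x) S) Delta w. *)
Definition sandwich (h : K * word * word -> K) (A B : word -> fs1 K) (t : fs2 K)
    (x : fs1 K) : fs1 K :=
  flatten [seq scale1 (h p) (mul1 (mul1 (A p.1.2) x) (B p.2)) | p <- t].

Lemma ev1_sandwich h A B t x f : ev1 (sandwich h A B t x) f =
  \sum_(p <- t) h p * ev1 (A p.1.2) (fun y => ev1 x (fun z =>
     ev1 (B p.2) (fun w => f ((y ++ z) ++ w)))).
Proof.
rewrite ev1_flatten big_map; apply: eq_bigr => p _.
by rewrite ev1_scale !ev1_mul.
Qed.

Lemma sandwich_ideal h A B t x : inI1 q s x -> inI1 q s (sandwich h A B t x).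
Proof.
move=> Ix; apply: (inI1_flatten (all_predT t)) => p _.
exact/inI1_scale/inI1_mullr.
Qed.

Lemma eqA_sandwich h A B t x y :
  eqA q s x y -> eqA q s (sandwich h A B t x) (sandwich h A B t y).
Proof.
pose G f z := \sum_(p <- t) h p *
  ev1 (A p.1.2) (fun v => ev1 (B p.2) (fun w => f ((v ++ z) ++ w))).
have ev_G x' f : ev1 (sandwich h A B t x') f = ev1 x' (G f).
  rewrite ev1_sandwich ev1_sum; apply: eq_bigr => p _.
  by rewrite ev1M ev1_swap.
move=> xy; apply: inI1_ev (sandwich_ideal h A B t xy) => f.
by rewrite ev1_cat ev1_scale !ev_G ev1_cat ev1_scale.
Qed.

Lemma m_S_id_coprod_cons g w f :
  ev1 (m_S_id antipode (coprod (g :: w))) f =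
  ev1 (sandwich (fun p => p.1.1 * sign K ((g == Th) && wpar p.1.2)) antipode (mono1 K)
         (coprod w) (m_S_id antipode (coprod_gen K g))) f.
Proof.
rewrite ev1_m_S_id /= ev2_mul ev1_sandwich ev2_swap {1}/ev2; apply: eq_bigr => p _.
rewrite -mulrA; congr (_ * _).
rewrite -ev1M; under [RHS]eq_ev1 => x do rewrite ev1_m_S_id -ev2M.
rewrite ev12_swap; apply: eq_ev2_in => r r_g.
rewrite antipode_cat ev1_mul mulrA -ev1M; apply: eq_ev1 => x; congr (_ * _).
  by rewrite -(coprod_gen_par r_g); sign_cases.
by apply: eq_ev1 => z; rewrite ev1_mono !catA.
Qed.

Lemma sandwich_counit_gen g t f :
  ev1 (sandwich (fun p => p.1.1 * sign K ((g == Th) && wpar p.1.2)) antipode (mono1 K) t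
         (scale1 (counit_gen K g) (one1 K))) f =
  ev1 (scale1 (counit_gen K g) (m_S_id antipode t)) f.
Proof.
rewrite ev1_sandwich ev1_scale ev1_m_S_id /ev2 mulr_sumr; apply: eq_bigr => p _.
have counit_sign : counit_gen K g * sign K ((g == Th) && wpar p.1.2) = counit_gen K g.
  by case: g; rewrite /counit_gen /= ?sign_false ?mulr1 ?mul0r.
under eq_ev1 => x do rewrite ev1_scale ev1_one ev1_mono cats0.
rewrite (ev1M (antipode p.1.2) (counit_gen K g) (fun x => f (x ++ p.2))).
by rewrite -[in RHS]counit_sign; ring.
Qed.

Lemma antipodel_word w : eqA q s (m_S_id antipode (coprod w)) (scale1 (counit w) (one1 K)).
Proof.
elim: w => [|g w IHw].
  apply: eqA_ev => f; rewrite ev1_m_S_id ev1_scale ev1_one /counit big_nil mul1r.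
  by rewrite coprod_nil ev2_one ev1_one.
apply: eqA_evl (fun f => esym (m_S_id_coprod_cons g w f)) _.
apply: eqA_trans (eqA_sandwich _ _ _ _ (antipodel_gen g)) _.
apply: eqA_evl (fun f => esym (sandwich_counit_gen g _ f)) _.
apply: eqA_trans (eqA_scale (counit_gen K g) IHw) _.
by apply: eqA_ev => f; rewrite !ev1_scale counit_cons mulrA.
Qed.

Lemma m_id_S_coprod_cons g w f :
  ev1 (m_id_S antipode (coprod (g :: w))) f =
  ev1 (sandwich (fun p => p.1.1 * sign K (wpar p.2 && wpar w)) (mono1 K) antipode
         (coprod_gen K g) (m_id_S antipode (coprod w))) f.
Proof.
rewrite ev1_m_id_S /= ev2_mul ev1_sandwich {1}/ev2; apply: eq_bigr => p _.
rewrite -mulrA; congr (_ * _).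
rewrite ev1_mono ev1_m_id_S -ev2M; apply: eq_ev2_in => r r_w.
rewrite antipode_cat ev1_mul mulrA; congr (_ * _).
  by rewrite -(coprod_par r_w); sign_cases.
by apply: eq_ev1 => z; apply: eq_ev1 => v; rewrite !catA.
Qed.

Lemma sandwich_counit w t f :
  ev1 (sandwich (fun p => p.1.1 * sign K (wpar p.2 && wpar w)) (mono1 K) antipode t
         (scale1 (counit w) (one1 K))) f =
  ev1 (scale1 (counit w) (m_id_S antipode t)) f.
Proof.
rewrite ev1_sandwich ev1_scale ev1_m_id_S /ev2 mulr_sumr; apply: eq_bigr => p _.
rewrite ev1_mono ev1_scale ev1_one.
under eq_ev1 => v do rewrite cats0.
by rewrite -[in RHS](counit_signr K w (wpar p.2)); ring.
Qed.

Lemma antipoder_word w : eqA q s (m_id_S antipode (coprod w)) (scale1 (counit w) (one1 K)).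
Proof.
elim: w => [|g w IHw].
  apply: eqA_ev => f; rewrite ev1_m_id_S ev1_scale ev1_one /counit big_nil mul1r.
  by rewrite coprod_nil ev2_one ev1_one.
apply: eqA_evl (fun f => esym (m_id_S_coprod_cons g w f)) _.
apply: eqA_trans (eqA_sandwich _ _ _ _ IHw) _.
apply: eqA_evl (fun f => esym (sandwich_counit w _ f)) _.
apply: eqA_trans (eqA_scale (counit w) (antipoder_gen g)) _.
by apply: eqA_ev => f; rewrite !ev1_scale counit_cons; ring.
Qed.

End HopfIdentities.

Section SuperHopf.
Variables (K : fieldType) (q s : K).
Notation coprod := (coprod K).
Notation counit := (counit K).
Notation antipode := (antipode K).
Implicit Types (a b : fs1 K).

Lemma coprod_wd a b : eqA q s a b -> eqA2 q s (linD coprod a) (linD coprod b).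
Proof.
move=> /coprod_ideal; apply: inI2_ev => f.
by rewrite ev2_cat ev2_scale !ev2_linD ev1_cat ev1_scale.
Qed.

Lemma counit_wd a b : eqA q s a b -> linE counit a = linE counit b.
Proof.
move=> /counit_ideal; rewrite ev1_cat ev1_scale mulN1r => /eqP.
by rewrite subr_eq0 => /eqP.
Qed.

Lemma antipode_wd a b : eqA q s a b -> eqA q s (linS antipode a) (linS antipode b).
Proof.
move=> /antipode_ideal; apply: inI1_ev => f.
by rewrite ev1_cat ev1_scale !ev1_linS ev1_cat ev1_scale.
Qed.

Lemma coassoc a : eqA3 q s (D_id coprod (linD coprod a)) (id_D coprod (linD coprod a)).
Proof.
exists [::]; split=> //; apply: ev_feq3 => f /=.
rewrite ev3_nil ev3_cat ev3_scale ev3_D_id ev3_id_D !ev2_linD.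
by under eq_ev1 => w do rewrite coassoc_word; rewrite mulN1r subrr.
Qed.

Lemma counitl a : eqA q s (m_E_id counit (linD coprod a)) a.
Proof.
apply: eqA_ev => f; rewrite ev1_m_E_id ev2_linD.
by apply: eq_ev1 => w; apply: counitl_word.
Qed.

Lemma counitr a : eqA q s (m_id_E counit (linD coprod a)) a.
Proof.
apply: eqA_ev => f; rewrite ev1_m_id_E ev2_linD.
by apply: eq_ev1 => w; apply: counitr_word.
Qed.

Lemma ev1_scale_counit a f :
  ev1 (scale1 (linE counit a) (one1 K)) f =
  ev1 (linS (fun w => scale1 (counit w) (one1 K)) a) f.
Proof.
rewrite ev1_scale ev1_one ev1_linS linE_ev1 mulrC -ev1M.
by apply: eq_ev1 => w; rewrite ev1_scale ev1_one mulrC.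
Qed.

Lemma antipodel a :
  eqA q s (m_S_id antipode (linD coprod a)) (scale1 (linE counit a) (one1 K)).
Proof.
apply: eqA_evr (fun f => esym (ev1_scale_counit a f)) _.
apply: eqA_evl (eqA_linS a (antipodel_word q s)) => f.
by rewrite ev1_linS ev1_m_S_id ev2_linD; apply: eq_ev1 => w; rewrite ev1_m_S_id.
Qed.

Lemma antipoder a :
  eqA q s (m_id_S antipode (linD coprod a)) (scale1 (linE counit a) (one1 K)).
Proof.
apply: eqA_evr (fun f => esym (ev1_scale_counit a f)) _.
apply: eqA_evl (eqA_linS a (antipoder_word q s)) => f.
by rewrite ev1_linS ev1_m_id_S ev2_linD; apply: eq_ev1 => w; rewrite ev1_m_id_S.
Qed.

Lemma coprodM a b :
  eqA2 q s (linD coprod (mul1 a b)) (mul2 (linD coprod a) (linD coprod b)).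
Proof.
apply: eqA2_ev => f; rewrite ev2_linD ev1_mul ev2_mul ev2_linD.
apply: eq_ev1 => u; under eq_ev1 => v do rewrite coprod_cat ev2_mul.
by rewrite ev12_swap; apply: eq_ev2 => u1 u2; rewrite ev2_linD.
Qed.

Lemma counitM a b : linE counit (mul1 a b) = linE counit a * linE counit b.
Proof.
rewrite !linE_ev1 ev1_mul mulrC -ev1M; apply: eq_ev1 => u.
by under eq_ev1 => v do rewrite counit_cat; rewrite ev1M mulrC.
Qed.

Lemma antipodeM (i j : bool) a b : homog i a -> homog j b ->
  eqA q s (linS antipode (mul1 a b))
          (scale1 (sign K (i && j)) (mul1 (linS antipode b) (linS antipode a))).
Proof.
move=> /allP a_i /allP b_j; apply: eqA_ev => f.
rewrite ev1_linS ev1_mul ev1_scale ev1_mul ev1_linS ev1_swap -ev1M.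
apply: eq_ev1_in => p pb; under [in RHS]eq_ev1 => v do rewrite ev1_linS.
rewrite [in RHS]ev1_swap -ev1M; apply: eq_ev1_in => r ra.
by rewrite antipode_cat ev1_mul (eqP (a_i r ra)) (eqP (b_j p pb)).
Qed.

Lemma super_hopf : is_super_hopf q s coprod counit antipode.
Proof.
split; first split.
- exact: coprod_wd.
- exact: counit_wd.
- exact: antipode_wd.
- exact: coassoc.
- by move=> a; split; [apply: counitl | apply: counitr].
- by move=> a; split; [apply: antipodel | apply: antipoder].
split; split.
- by apply: eqA2_ev => f; rewrite ev2_linD ev1_one.
- by rewrite linE_ev1 ev1_one /counit big_nil.
- by apply: eqA_ev => f; rewrite ev1_linS ev1_one.
- exact: coprodM.
- exact: counitM.
- exact: antipodeM.
Qed.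

End SuperHopf.

Theorem theorem3p2 (R : rcfType) (q s : R[i]) :
  q != 0 -> s ^+ 2 = q ->
  exists (D : word -> fs2 R[i]) (E : word -> R[i]) (S : word -> fs1 R[i]),
    [/\ is_super_hopf q s D E S,
        [/\ eqA2 q s (linD D (mono1 R[i] [:: Xp])) [:: (1, [:: Xp], [:: Xp])],
            eqA2 q s (linD D (mono1 R[i] [:: Th])) [:: (1, [:: Th], [::]); (1, [::], [:: Th])] &
            eqA2 q s (linD D (mono1 R[i] [:: Xm]))
                 [:: (1, [:: Xpi], [:: Xm]); (1, [:: Xm], [:: Xpi])]],
        [/\ linE E (mono1 R[i] [:: Xp]) = 1, linE E (mono1 R[i] [:: Th]) = 0 &
            linE E (mono1 R[i] [:: Xm]) = 0] &
        [/\ eqA q s (linS S (mono1 R[i] [:: Xp])) (mono1 R[i] [:: Xpi]),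
            eqA q s (linS S (mono1 R[i] [:: Th])) [:: (-1, [:: Th])] &
            eqA q s (linS S (mono1 R[i] [:: Xm])) [:: (-1, [:: Xp; Xm; Xp])]]].
Proof.
move=> _ _; exists (coprod R[i]), (counit R[i]), (antipode R[i]); split.
- exact: super_hopf.
- by split; apply: eqA2_ev => f; rewrite ev2_linD ev1_mono; expand_ev.
- by split; rewrite linE_ev1 ev1_mono /counit; expand_ev.
- by split; apply: eqA_ev => f; rewrite ev1_linS ev1_mono; expand_ev.
Qed.
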